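(* Let $(\Omega(\mathcal{A}),\mathrm{d},\bar{\mathrm{d}})$ be a bidifferential graded algebra, and let $M,N\ge 1$. Let $X$ be an $N\times N$ matrix and $Y$ an $M\times N$ matrix with entries in $\mathcal{A}$, let $P$ be an $N\times N$ matrix and $R$ an $N\times N$ matrix with entries in $\mathcal{A}$, and let $Q$ be an $N\times M$ matrix with entries in $\mathcal{A}$, such that $\mathrm{d}R=0$ and $\mathrm{d}Q=0$. Suppose that $$\bar{\mathrm{d}}X=(\mathrm{d}X)\,P,\qquad \bar{\mathrm{d}}Y=(\mathrm{d}Y)\,P,\qquad R\,X+Q\,Y=X\,P,$$ and that $X$ is invertible. Then $\Phi:=Y X^{-1}$ satisfies $$\bar{\mathrm{d}}\,\mathrm{d}\,\Phi=(\mathrm{d}\Phi)\,Q\,(\mathrm{d}\Phi).$$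
   Context: $\mathcal{A}$ is a unital associative algebra over $\mathbb{C}$ with identity $I$. A bidifferential graded algebra $(\Omega(\mathcal{A}),\mathrm{d},\bar{\mathrm{d}})$ consists of a graded associative algebra $\Omega(\mathcal{A})=\bigoplus_{r\ge 0}\Omega^r(\mathcal{A})$ with $\Omega^0(\mathcal{A})=\mathcal{A}$ (each $\Omega^r(\mathcal{A})$ an $\mathcal{A}$-bimodule) together with two linear maps $\mathrm{d},\bar{\mathrm{d}}:\Omega^r(\mathcal{A})\to\Omega^{r+1}(\mathcal{A})$ satisfying the graded Leibniz rule $\mathrm{d}(\alpha\beta)=(\mathrm{d}\alpha)\beta+(-1)^r\alpha\,\mathrm{d}\beta$ for $\alpha\in\Omega^r(\mathcal{A})$ (and likewise for $\bar{\mathrm{d}}$), and $\mathrm{d}^2=\bar{\mathrm{d}}^2=0$, $\mathrm{d}\bar{\mathrm{d}}+\bar{\mathrm{d}}\mathrm{d}=0$. The maps $\mathrm{d},\bar{\mathrm{d}}$ are applied entrywise to matrices with entries in $\Omega(\mathcal{A})$, and products of such matrices use the matrix product together with the product of $\Omega(\mathcal{A})$. Inverses are taken in the algebra of square matrices over $\mathcal{A}$. *)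

From HB Require Import structures.
From mathcomp Require Import all_boot all_order all_algebra.
Set Implicit Arguments. Unset Strict Implicit. Unset Printing Implicit Defensive.
Import GRing.Theory.
Local Open Scope ring_scope.

(* Omega(A) is modelled as a single (noncommutative) K-algebra W together with
   a family of subspaces [hom r] (= Omega^r(A)) such that W is their direct sum
   and hom r * hom s ⊆ hom (r+s).  The algebra A is Omega^0(A) = hom 0, which
   contains the identity 1.  d, db are K-linear maps of degree +1. *)
Record bidga (K : fieldType) (W : algType K) := Bidga {
  hom : nat -> W -> Prop;
  d : W -> W;
  db : W -> W;
  hom_0 : forall r, hom r 0;
  hom_add : forall r x y, hom r x -> hom r y -> hom r (x + y);
  hom_scale : forall r (k : K) x, hom r x -> hom r (k *: x);
  hom_mul : forall r s x y, hom r x -> hom s y -> hom (r + s)%N (x * y);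
  hom_1 : hom 0 1;
  hom_decomp : forall x, exists (n : nat) (f : nat -> W),
      (forall r, hom r (f r)) /\ x = \sum_(r < n) f r;
  hom_direct : forall (n : nat) (f : nat -> W),
      (forall r, hom r (f r)) -> \sum_(r < n) f r = 0 ->
      forall r, (r < n)%N -> f r = 0;
  d_linear : forall (k : K) x y, d (k *: x + y) = k *: d x + d y;
  db_linear : forall (k : K) x y, db (k *: x + y) = k *: db x + db y;
  d_deg : forall r x, hom r x -> hom r.+1 (d x);
  db_deg : forall r x, hom r x -> hom r.+1 (db x);
  d_leibniz : forall r x y, hom r x ->
      d (x * y) = d x * y + (-1) ^+ r * x * d y;
  db_leibniz : forall r x y, hom r x ->
      db (x * y) = db x * y + (-1) ^+ r * x * db y;
  d_d : forall x, d (d x) = 0;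
  db_db : forall x, db (db x) = 0;
  d_db : forall x, d (db x) + db (d x) = 0
}.

Definition mx_in_A (K : fieldType) (W : algType K) (B : bidga W) (m n : nat)
  (Z : 'M[W]_(m, n)) : Prop := forall i j, hom B 0 (Z i j).

Definition dmx (K : fieldType) (W : algType K) (B : bidga W) (m n : nat)
  (Z : 'M[W]_(m, n)) : 'M[W]_(m, n) := map_mx (d B) Z.
Definition dbmx (K : fieldType) (W : algType K) (B : bidga W) (m n : nat)
  (Z : 'M[W]_(m, n)) : 'M[W]_(m, n) := map_mx (db B) Z.

From Pilot Require Import Defs.
From HB Require Import structures.
From mathcomp Require Import all_boot all_order all_algebra.
Import GRing.Theory.
Local Open Scope ring_scope.
Set Implicit Arguments. Unset Strict Implicit.

(* Both d and db are graded derivations, so everything we need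
   about them is proved once for an arbitrary linear map D obeying the graded
   Leibniz rule: D is additive, kills 1, obeys the product rule for matrices
   whose entries lie in Omega^0 (and the signed rule for Omega^1), and
   consequently D(Y X^-1) = (DY - (Y X^-1) DX) X^-1.
   Writing Phi = Y X^-1, the two linear equations for X and Y then give
     db Phi = (dY - Phi dX) P X^-1 = dPhi (X P X^-1) = dPhi (R + Q Phi),
   since X P X^-1 = (R X + Q Y) X^-1 = R + Q Phi.  Applying d to this linear
   (Riccati-type) equation, using db d = - d db, d^2 = 0, dR = dQ = 0 and the
   signed Leibniz rule for the degree-one matrix dPhi, yields
     db d Phi = dPhi Q dPhi. *)

Definition mx_hom (K : fieldType) (W : algType K) (B : bidga W) (r : nat)
  (m n : nat) (Z : 'M[W]_(m, n)) : Prop := forall i j, Defs.hom B r (Z i j).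

Section Degrees.
Variables (K : fieldType) (W : algType K) (B : bidga W).

Lemma hom_sum r n (f : 'I_n -> W) :
  (forall i, Defs.hom B r (f i)) -> Defs.hom B r (\sum_i f i).
Proof. by move=> hf; apply: big_ind => //; [exact: hom_0 | exact: hom_add]. Qed.

Lemma mx_hom_mul r s m n p (U : 'M[W]_(m, n)) (V : 'M[W]_(n, p)) :
  mx_hom B r U -> mx_hom B s V -> mx_hom B (r + s) (U *m V).
Proof. by move=> hU hV i j; rewrite mxE; apply: hom_sum => k; apply: hom_mul. Qed.

Lemma mx_hom_d r m n (U : 'M[W]_(m, n)) :
  mx_hom B r U -> mx_hom B r.+1 (dmx B U).
Proof. by move=> hU i j; rewrite mxE; apply: d_deg. Qed.

End Degrees.

(* Calculus of an arbitrary graded derivation D, applied entrywise to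
   matrices; it is instantiated with both d and db. *)
Section GradedDerivation.
Variables (K : fieldType) (W : algType K) (B : bidga W) (D : W -> W).
Hypothesis D_linear : forall (k : K) x y, D (k *: x + y) = k *: D x + D y.
Hypothesis D_leibniz : forall r x y, Defs.hom B r x ->
  D (x * y) = D x * y + (-1) ^+ r * x * D y.

Lemma D_add x y : D (x + y) = D x + D y.
Proof. by have := D_linear 1 x y; rewrite !scale1r. Qed.

Lemma D0 : D 0 = 0.
Proof. by apply: (addrI (D 0)); rewrite -D_add !addr0. Qed.

Lemma D1 : D 1 = 0.
Proof.
have := D_leibniz 1 (hom_1 B); rewrite expr0 !mul1r mulr1 => D11.
by apply: (addrI (D 1)); rewrite -D11 addr0.
Qed.

Lemma D_sum n (f : 'I_n -> W) : D (\sum_i f i) = \sum_i D (f i).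
Proof. exact: (big_morph _ D_add D0). Qed.

Lemma Dmx_add m n (U V : 'M[W]_(m, n)) :
  map_mx D (U + V) = map_mx D U + map_mx D V.
Proof. by apply/matrixP => i j; rewrite !mxE D_add. Qed.

Lemma Dmx_id n : map_mx D (1%:M : 'M[W]_n) = 0.
Proof. by apply/matrixP => i j; rewrite !mxE; case: (i == j); rewrite ?D1 ?D0. Qed.

Lemma Dmx_mul_deg0 m n p (U : 'M[W]_(m, n)) (V : 'M[W]_(n, p)) :
  mx_hom B 0 U -> map_mx D (U *m V) = map_mx D U *m V + U *m map_mx D V.
Proof.
move=> hU; apply/matrixP => i j; rewrite !mxE D_sum -big_split /=.
by apply: eq_bigr => k _; rewrite (D_leibniz _ (hU i k)) expr0 mul1r !mxE.
Qed.

Lemma Dmx_mul_deg1 m n p (U : 'M[W]_(m, n)) (V : 'M[W]_(n, p)) :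
  mx_hom B 1 U -> map_mx D (U *m V) = map_mx D U *m V - U *m map_mx D V.
Proof.
move=> hU; apply/matrixP => i j; rewrite !mxE D_sum -sumrN -big_split /=.
apply: eq_bigr => k _.
by rewrite (D_leibniz _ (hU i k)) expr1 mulN1r mulNr !mxE.
Qed.

Lemma Dmx_inv n (X Xi : 'M[W]_n) : mx_hom B 0 X ->
  X *m Xi = 1%:M -> Xi *m X = 1%:M ->
  map_mx D Xi = - (Xi *m map_mx D X *m Xi).
Proof.
move=> hX inv1 inv2.
have := Dmx_mul_deg0 Xi hX; rewrite inv1 Dmx_id => /esym/eqP.
rewrite addrC addr_eq0 => /eqP XDXi.
by rewrite -[map_mx D Xi]mul1mx -inv2 -mulmxA XDXi mulmxN mulmxA.
Qed.

Lemma Dmx_quotient m n (Y : 'M[W]_(m, n)) (X Xi : 'M[W]_n) :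
  mx_hom B 0 Y -> mx_hom B 0 X -> X *m Xi = 1%:M -> Xi *m X = 1%:M ->
  map_mx D (Y *m Xi) = (map_mx D Y - Y *m Xi *m map_mx D X) *m Xi.
Proof.
move=> hY hX inv1 inv2.
by rewrite Dmx_mul_deg0 // (Dmx_inv hX) // mulmxBl !mulmxN !mulmxA.
Qed.

End GradedDerivation.

Section Bidifferential.
Variables (K : fieldType) (W : algType K) (B : bidga W).

Lemma dmx_dmx m n (U : 'M[W]_(m, n)) : map_mx (d B) (map_mx (d B) U) = 0.
Proof. by apply/matrixP => i j; rewrite !mxE d_d. Qed.

Lemma dbmx_dmx m n (U : 'M[W]_(m, n)) :
  map_mx (db B) (map_mx (d B) U) = - map_mx (d B) (map_mx (db B) U).
Proof.
apply/matrixP => i j; rewrite !mxE; apply/eqP.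
by rewrite -subr_eq0 opprK addrC d_db.
Qed.

Lemma riccati_of_linear m n (Phi : 'M[W]_(m, n)) (R : 'M[W]_n)
    (Q : 'M[W]_(n, m)) :
  mx_hom B 0 Phi -> mx_hom B 0 Q -> dmx B R = 0 -> dmx B Q = 0 ->
  dbmx B Phi = dmx B Phi *m (R + Q *m Phi) ->
  dbmx B (dmx B Phi) = dmx B Phi *m Q *m dmx B Phi.
Proof.
move=> hPhi hQ dR dQ linPhi.
have hdPhi : mx_hom B 1 (dmx B Phi) by exact: mx_hom_d.
rewrite /dmx /dbmx in dR dQ linPhi hdPhi *.
rewrite dbmx_dmx linPhi (Dmx_mul_deg1 (d_linear B) (@d_leibniz _ _ B)) //.
rewrite dmx_dmx mul0mx sub0r (Dmx_add (d_linear B)) dR add0r.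
by rewrite (Dmx_mul_deg0 (d_linear B) (@d_leibniz _ _ B)) // dQ mul0mx add0r
  opprK mulmxA.
Qed.

End Bidifferential.

Theorem theorem1 (K : fieldType) (W : algType K) (B : bidga W) (M N : nat)
  (hM : (1 <= M)%N) (hN : (1 <= N)%N)
  (X : 'M[W]_(N, N)) (Y : 'M[W]_(M, N)) (P R : 'M[W]_(N, N)) (Q : 'M[W]_(N, M))
  (hX : mx_in_A B X) (hY : mx_in_A B Y) (hP : mx_in_A B P) (hR : mx_in_A B R)
  (hQ : mx_in_A B Q)
  (dR : dmx B R = 0) (dQ : dmx B Q = 0)
  (eX : dbmx B X = dmx B X *m P) (eY : dbmx B Y = dmx B Y *m P)
  (eXP : R *m X + Q *m Y = X *m P)
  (Xi : 'M[W]_(N, N)) (hXi : mx_in_A B Xi)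
  (inv1 : X *m Xi = 1%:M) (inv2 : Xi *m X = 1%:M) :
  dbmx B (dmx B (Y *m Xi)) = dmx B (Y *m Xi) *m Q *m dmx B (Y *m Xi).
Proof.
have hPhi : mx_hom B 0 (Y *m Xi) by exact: (mx_hom_mul hY hXi).
apply: (riccati_of_linear (R := R)) => //.
have dPhi := Dmx_quotient (d_linear B) (@d_leibniz _ _ B) hY hX inv1 inv2.
have dbPhi := Dmx_quotient (db_linear B) (@db_leibniz _ _ B) hY hX inv1 inv2.
(* X P X^-1 = (R X + Q Y) X^-1 = R + Q Phi *)
have conjP : X *m P *m Xi = R + Q *m (Y *m Xi).
  by rewrite -eXP mulmxDl -mulmxA inv1 mulmx1 mulmxA.
rewrite /dmx /dbmx in eX eY *.
rewrite dbPhi eY eX -conjP dPhi.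
by rewrite !mulmxA -mulmxBl -(mulmxA _ Xi X) inv2 mulmx1.
Qed.
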